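(* Let $\kappa>0$, let $N\ge2$ be even, and let $X_N\in\mathbb R^{(N-1)\times(N-1)}$ be the matrix with entries $(X_N)_{ij}=a_{i\wedge j}\,a_{N-(i\vee j)}/a_N$ for $1\le i,j\le N-1$. Then for all $k\ge1$ and all $1\le i\le j\le N/2$: $$(X_N^k)_{N/2,N/2}\ge\frac{a_{N/2}^2\big\{\sum_{l=1}^{N-1}a_{l\wedge(N-l)}^2\big\}^{k-1}}{a_N^k},$$ $$(X_N^k)_{N/2,i}=(X_N^k)_{N/2,N-i},\qquad (X_N^k)_{N/2,i}\le(X_N^k)_{N/2,j},\qquad (X_N^k)_{N/2,i}\ge\frac{a_i}{a_{N/2}}(X_N^k)_{N/2,N/2}.$$
   Context: The sequence $\{a_i\}_{i\ge0}$ is defined by $a_0=0$, $a_1=1$ and $a_i=(2+\kappa^2/N^2)a_{i-1}-a_{i-2}$ for $i\ge2$. *)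

From HB Require Import structures.
From mathcomp Require Import all_boot all_order all_algebra.
From mathcomp Require Import reals.
Set Implicit Arguments. Unset Strict Implicit. Unset Printing Implicit Defensive.
Import Order.TTheory GRing.Theory Num.Theory.
Local Open Scope ring_scope.

Section Defs.
Variable R : realType.

(* pairs (a_n, a_{n+1}) for the recurrence a_i = c a_{i-1} - a_{i-2} *)
Fixpoint apair (c : R) (n : nat) : R * R :=
  match n with
  | 0 => (0, 1)
  | n'.+1 => let p := apair c n' in (p.2, c * p.2 - p.1)
  end.

(* a_n for a_0 = 0, a_1 = 1, a_i = (2 + kappa^2/N^2) a_{i-1} - a_{i-2} *)
Definition aseq (kappa : R) (N n : nat) : R :=
  (apair (2 + kappa ^+ 2 / (N%:R) ^+ 2) n).1.

(* X_N, stored 0-based: entry (i,j) is paper entry (i+1, j+1) *)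
Definition XN (kappa : R) (N : nat) : 'M[R]_(N.-1) :=
  \matrix_(i < N.-1, j < N.-1)
    (aseq kappa N (minn i.+1 j.+1) * aseq kappa N (N - maxn i.+1 j.+1)
      / aseq kappa N N).

End Defs.

(* 1-based entry access: ent M p q = M_{p,q} for 1 <= p, q <= n (0 otherwise) *)
Definition ent (R : Type) (n : nat) (d : R) (M : 'M[R]_n) (p q : nat) : R :=
  match @insub _ (fun x => x < n)%N _ p.-1, @insub _ (fun x => x < n)%N _ q.-1 with
  | Some i, Some j => M i j
  | _, _ => d
  end.

(* [green] is the Green function of the Dirichlet problem for the operator
   [u |-> c u_q - u_(q-1) - u_(q+1)] on [0, N]: [a] and [a (N - _)] solve the
   recurrence and their Casoratian is [a N], so [X_N] inverts the tridiagonal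
   matrix [c I - shift].  Hence consecutive middle rows [u] and [w] of the
   powers of [X_N] satisfy [c w_q - w_(q-1) - w_(q+1) = u_q], and positivity, the
   symmetry [q <-> N - q] and monotonicity on [1, N/2] pass from [u] to [w]: the
   increments of [w] are superharmonic, so a discrete minimum principle (this is
   where [c > 2] is needed) keeps them nonnegative.  The bound
   [a_i G(l, j) <= G(l, i) a_j] for [i <= j] holds entrywise, which gives the
   comparison with the central entry, and summing it against [G(l, N/2)] gives
   the geometric growth of the central entry. *)

From HB Require Import structures.
From mathcomp Require Import all_boot all_order all_algebra.
From mathcomp Require Import reals.
From mathcomp Require Import zify ring lra.
Import Order.TTheory GRing.Theory Num.Theory.
Set Implicit Arguments.
Unset Strict Implicit.
Unset Printing Implicit Defensive.

Local Open Scope ring_scope.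

Lemma entE {T : Type} {n : nat} (d : T) (M : 'M[T]_n) (i j : 'I_n) :
  ent d M i.+1 j.+1 = M i j.
Proof.
case: i j => [i lt_in] [j lt_jn]; rewrite /ent /=.
by rewrite (insubT (fun x => x < n)%N lt_in) (insubT (fun x => x < n)%N lt_jn).
Qed.

Lemma ent_out {T : Type} {n : nat} (d : T) (M : 'M[T]_n) p q :
  (n < q)%N -> ent d M p q = d.
Proof.
move=> lt_nq; rewrite /ent (@insubF _ (fun x => x < n)%N _ q.-1); last first.
  by apply/negbTE; rewrite -leqNgt; lia.
by case: insub.
Qed.

Lemma discrete_min_principle (R : realFieldType) (c : R) (D : nat -> R) M :
  2 < c -> 0 <= D 0%N ->
  (forall q, (0 < q < M)%N -> D q.-1 + D q.+1 <= c * D q) ->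
  0 <= D M.-1 + D M ->
  forall q, (q < M)%N -> 0 <= D q.
Proof.
move=> c_gt2 D0_ge0 superharmonic end_ge0 q lt_qM.
case: (@arg_minP _ R _ (Ordinal lt_qM) xpredT (fun i : 'I_M => D i)) => //.
move=> [j lt_jM] _ /= Dmin.
suff : 0 <= D j by have := Dmin (Ordinal lt_qM) isT; rewrite /=; lra.
case: j lt_jM Dmin => [//|j] lt_jM Dmin.
case: (lerP 0 (D j.+1)) => // Dj_lt0.
have Dj_le : D j.+1 <= D j by apply: (Dmin (Ordinal (ltnW lt_jM))).
have Dnext_ge : D j.+1 <= D j.+2.
  case: (ltnP j.+2 M) => [lt_j2M | ge_j2M]; first exact: (Dmin (Ordinal lt_j2M)).
  have eM : M = j.+2 by lia.
  by move: end_ge0; rewrite eM /=; lra.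
have := superharmonic j.+1 ltac:(lia); rewrite /=; nra.
Qed.

Lemma big_nat_delta (R : pzSemiRingType) (F : nat -> R) m n q :
  (m <= q < n)%N -> \sum_(m <= l < n) F l * (l == q)%:R = F q.
Proof.
move=> q_range; rewrite (bigD1_seq q) ?mem_index_iota ?iota_uniq //= eqxx mulr1.
by rewrite big1 ?addr0 // => l /negbTE->; rewrite mulr0.
Qed.

Section Green.
Variables (R : realFieldType) (c : R) (a : nat -> R).
Hypotheses (a0 : a 0%N = 0) (a1 : a 1%N = 1)
  (aSS : forall k, a k.+2 = c * a k.+1 - a k).

Lemma a_addS p r : a (p.+1 + r) = a p.+1 * a r.+1 - a p * a r.
Proof.
suff : a (p.+1 + r) = a p.+1 * a r.+1 - a p * a r /\
       a (p.+1 + r.+1) = a p.+1 * a r.+2 - a p * a r.+1 by case.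
elim: r => [|r [IHr IHrS]].
  by rewrite addn0 addn1 (aSS 0) (aSS p) a1 a0; split; ring.
split => //; rewrite !addnS aSS -!addnS IHr IHrS (aSS r.+1) (aSS r); ring.
Qed.

Lemma a_pred_succ q : (0 < q)%N -> a q.-1 + a q.+1 = c * a q.
Proof. by case: q => // q _; rewrite aSS /=; ring. Qed.

Hypothesis c_ge2 : 2 <= c.

Lemma a_ge0_incr k : 0 <= a k /\ 1 <= a k.+1 - a k.
Proof.
elim: k => [|k [ak_ge0 incr]]; first by rewrite a1 a0 subr0 lexx.
have : 0 <= (c - 2) * a k.+1 by rewrite mulr_ge0 ?subr_ge0 //; lra.
rewrite aSS; split; lra.
Qed.

Lemma a_ge0 k : 0 <= a k.
Proof. by case: (a_ge0_incr k). Qed.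

Lemma a_gt0 k : (0 < k)%N -> 0 < a k.
Proof. by case: k => // k _; have [] := a_ge0_incr k; lra. Qed.

Lemma a_le i j : (i <= j)%N -> a i <= a j.
Proof.
move=> le_ij; rewrite -(subnK le_ij); elim: (j - i)%N => // d IHd.
by rewrite addSn; have [_] := a_ge0_incr (d + i); lra.
Qed.

Variable N : nat.
Hypothesis N_gt0 : (0 < N)%N.

Definition green l q := a (minn l q) * a (N - maxn l q) / a N.

Lemma aN_gt0 : 0 < a N.
Proof. exact: a_gt0. Qed.

Lemma green_ge0 l q : 0 <= green l q.
Proof. by rewrite /green divr_ge0 ?mulr_ge0 ?a_ge0. Qed.

Lemma green_le l q : (l <= q)%N -> green l q = a l * a (N - q) / a N.
Proof. by move=> le_lq; rewrite /green (minn_idPl le_lq) (maxn_idPr le_lq). Qed.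

Lemma green_ge l q : (q <= l)%N -> green l q = a q * a (N - l) / a N.
Proof. by move=> le_ql; rewrite /green (minn_idPr le_ql) (maxn_idPl le_ql). Qed.

Lemma green_l0 l : green l 0 = 0.
Proof. by rewrite /green minn0 a0 !mul0r. Qed.

Lemma green_out l q : (N <= q)%N -> green l q = 0.
Proof.
by move=> le_Nq; rewrite /green (_ : N - maxn l q = 0)%N ?a0 ?mulr0 ?mul0r //; lia.
Qed.

Lemma green_rev l q : (l <= N)%N -> (q <= N)%N -> green (N - l) (N - q) = green l q.
Proof.
move=> le_lN le_qN; rewrite /green [a (minn l q) * _]mulrC.
by congr (a _ * a _ / _); lia.
Qed.

Lemma green_laplacian l q : (0 < l < N)%N -> (0 < q < N)%N ->
  c * green l q - green l q.-1 - green l q.+1 = (l == q)%:R.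
Proof.
move=> /andP[l_gt0 lt_lN] /andP[q_gt0 lt_qN].
have aN_neq0 : a N != 0 by rewrite gt_eqF ?aN_gt0.
case: (ltngtP l q) => [lt_lq | lt_ql | <-].
- rewrite !green_le ?(ltnW lt_lq) //; try lia.
  have := @a_pred_succ (N - q) ltac:(lia).
  rewrite (_ : (N - q).-1 = N - q.+1)%N; last by lia.
  rewrite (_ : (N - q).+1 = N - q.-1)%N; last by lia.
  move=> rec; rewrite mulr0n.
  have -> : c * (a l * a (N - q) / a N) = a l * (c * a (N - q)) / a N by ring.
  rewrite -rec; ring.
- rewrite !green_ge //; try lia.
  rewrite mulr0n.
  have -> : c * (a q * a (N - l) / a N) = (c * a q) * a (N - l) / a N by ring.
  rewrite -(a_pred_succ q_gt0); ring.
- rewrite green_le // green_ge ?leq_pred // green_le //.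
  (* The Casoratian of the solutions [a] and [a (N - _)] is constant, equal to [a N]. *)
  have casoratian : a l * a (N - l.-1) - a l.-1 * a (N - l) = a N.
    have := a_addS l.-1 (N - l); rewrite prednK // subnKC; last exact: ltnW.
    move=> ->; congr (_ * a _ - _); lia.
  have := @a_pred_succ (N - l) ltac:(lia).
  rewrite (_ : (N - l).-1 = N - l.+1)%N; last by lia.
  rewrite (_ : (N - l).+1 = N - l.-1)%N; last by lia.
  move=> rec.
  have -> : c * (a l * a (N - l) / a N) - a l.-1 * a (N - l) / a N
              - a l * a (N - l.+1) / a N
            = (a l * (c * a (N - l) - a (N - l.+1)) - a l.-1 * a (N - l)) / a N.
    by ring.
  by rewrite -rec (addrC (a (N - l.+1))) addrK casoratian divff.
Qed.

Lemma green_ratio l i j : (i <= j <= N)%N -> a i * green l j <= green l i * a j.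
Proof.
move=> /andP[le_ij le_jN].
have aN_inv_ge0 : 0 <= (a N)^-1 by rewrite invr_ge0 a_ge0.
have [le_jl | lt_lj] := leqP j l.
  have le_il : (i <= l)%N by exact: leq_trans le_jl.
  rewrite !green_ge //.
  by have -> : a i * (a j * a (N - l) / a N) = a i * a (N - l) / a N * a j by ring.
have [le_il | lt_li] := leqP i l.
  rewrite green_le ?green_ge //; last exact: ltnW.
  have : a l * a (N - j) <= a j * a (N - l).
    by apply: ler_pM; rewrite ?a_ge0 //; apply: a_le; lia.
  move/(ler_wpM2l (mulr_ge0 (a_ge0 i) aN_inv_ge0)); lra.
rewrite !green_le; try lia.
have : a i * a (N - j) <= a j * a (N - i).
  by apply: ler_pM; rewrite ?a_ge0 //; apply: a_le; lia.
move/(ler_wpM2l (mulr_ge0 (a_ge0 l) aN_inv_ge0)); lra.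
Qed.

Definition green_mul (u : nat -> R) q := \sum_(1 <= l < N) u l * green l q.

Lemma green_mul_ord u q :
  green_mul u q = \sum_(l < N.-1) u l.+1 * green l.+1 q.
Proof. by rewrite /green_mul big_add1 big_mkord. Qed.

Lemma green_mul_ge0 u q : (forall l, 0 <= u l) -> 0 <= green_mul u q.
Proof. by move=> u_ge0; apply: sumr_ge0 => l _; rewrite mulr_ge0 ?green_ge0. Qed.

Lemma green_mul_l0 u : green_mul u 0 = 0.
Proof. by apply: big1 => l _; rewrite green_l0 mulr0. Qed.

Lemma green_mul_out u q : (N <= q)%N -> green_mul u q = 0.
Proof. by move=> le_Nq; apply: big1 => l _; rewrite green_out ?mulr0. Qed.

Lemma green_mul_rev u : (forall q, (q <= N)%N -> u q = u (N - q)%N) ->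
  forall q, (q <= N)%N -> green_mul u q = green_mul u (N - q).
Proof.
move=> u_rev q le_qN; rewrite [RHS]/green_mul big_nat_rev.
apply: eq_big_nat => l /andP[l_gt0 lt_lN]; rewrite add1n subSS.
have le_lN := ltnW lt_lN.
by rewrite -u_rev ?leq_subr // green_rev ?leq_subr // !subKn.
Qed.

Lemma green_mul_laplacian u q : (0 < q < N)%N ->
  c * green_mul u q - green_mul u q.-1 - green_mul u q.+1 = u q.
Proof.
move=> q_range; rewrite /green_mul mulr_sumr -!sumrB.
transitivity (\sum_(1 <= l < N) u l * (l == q)%:R).
  by apply: eq_big_nat => l l_range; rewrite -green_laplacian //; ring.
by rewrite big_nat_delta //; lia.
Qed.

Lemma green_mul_ratio u : (forall l, 0 <= u l) ->
  forall i j, (i <= j <= N)%N -> a i * green_mul u j <= green_mul u i * a j.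
Proof.
move=> u_ge0 i j ij_range; rewrite mulr_sumr mulr_suml; apply: ler_sum => l _.
by rewrite mulrCA -mulrA ler_wpM2l ?green_ratio.
Qed.

Section Middle.
Variable m : nat.
Hypothesis N_double : N = (m + m)%N.
Hypothesis c_gt2 : 2 < c.

Lemma green_mul_mono u : (forall l, 0 <= u l) ->
  (forall q, (q <= N)%N -> u q = u (N - q)%N) ->
  (forall i j, (0 < i)%N -> (i <= j <= m)%N -> u i <= u j) ->
  forall i j, (i <= j <= m)%N -> green_mul u i <= green_mul u j.
Proof.
move=> u_ge0 u_rev u_mono; set w := green_mul u.
have m_gt0 : (0 < m)%N by lia.
have w_rev : w m.+1 = w m.-1.
  by rewrite /w green_mul_rev //; [congr (green_mul u _) | ]; lia.
have w_incr : forall q, (q < m)%N -> 0 <= w q.+1 - w q.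
  apply: (@discrete_min_principle _ c (fun q => w q.+1 - w q) m c_gt2).
  - by rewrite /w green_mul_l0 subr0 green_mul_ge0.
  - move=> q /andP[q_gt0 lt_qm]; rewrite prednK //.
    have := @green_mul_laplacian u q ltac:(lia).
    have := @green_mul_laplacian u q.+1 ltac:(lia).
    have := u_mono q q.+1 q_gt0 ltac:(lia).
    rewrite /w /=; lra.
  - by rewrite prednK // w_rev; lra.
move=> i j /andP[]; elim: j => [|j IHj]; first by rewrite leqn0 => /eqP->.
rewrite leq_eqVlt => /orP[/eqP-> // | le_ij lt_jm].
by have := IHj le_ij (ltnW lt_jm); have := w_incr j lt_jm; lra.
Qed.

Lemma green_mid l : (0 < l < N)%N -> green l m = a (minn l (N - l)) * a m / a N.
Proof.
move=> l_range; have [le_lm | lt_ml] := leqP l m.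
  by rewrite green_le // (_ : N - m = m)%N ?(minn_idPl _) //; lia.
rewrite green_ge; last exact: ltnW.
by rewrite [a m * _]mulrC (_ : minn l (N - l) = N - l)%N //; lia.
Qed.

Variable X : 'M[R]_N.-1.
Hypothesis XE : forall i j : 'I_N.-1, X i j = green i.+1 j.+1.

Fact mid_lt : (m.-1 < N.-1)%N. Proof. lia. Qed.

(* Row [N/2] of [X ^+ k] with 1-based column index; the zero padding at [q = 0]
   and [q >= N] matches the boundary values of [green]. *)
Definition midrow k q := if (0 < q)%N then ent 0 (X ^+ k) m q else 0.

Lemma midrowE k (j : 'I_N.-1) : midrow k j.+1 = (X ^+ k) (Ordinal mid_lt) j.
Proof. by rewrite /midrow /= -(entE 0) /= prednK //; lia. Qed.

Lemma midrow_out k q : (N <= q)%N -> midrow k q = 0.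
Proof. by move=> le_Nq; rewrite /midrow ent_out; [case: ifP | lia]. Qed.

Lemma midrow0 q : midrow 0 q = (q == m)%:R.
Proof.
case: q => [|q]; first by rewrite /midrow /=; case: eqP => //; lia.
have [le_Nq | lt_qN] := leqP N q.+1.
  by rewrite midrow_out //; case: eqP => //; lia.
have lt_q : (q < N.-1)%N by lia.
rewrite (midrowE 0 (Ordinal lt_q)) expr0 mxE -val_eqE /=.
by case: eqP => [<-|]; case: eqP => //; lia.
Qed.

Lemma midrowS k q : midrow k.+1 q = green_mul (midrow k) q.
Proof.
case: q => [|q]; first by rewrite green_mul_l0.
have [le_Nq | lt_qN] := leqP N q.+1; first by rewrite midrow_out ?green_mul_out.
have lt_q : (q < N.-1)%N by lia.
rewrite (midrowE k.+1 (Ordinal lt_q)) exprSr -mulmxE mxE green_mul_ord.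
by apply: eq_bigr => l _; rewrite midrowE XE.
Qed.

Lemma midrow_invariants k :
  [/\ forall q, 0 <= midrow k q,
      forall q, (q <= N)%N -> midrow k q = midrow k (N - q)
    & forall i j, (0 < i)%N -> (i <= j <= m)%N -> midrow k i <= midrow k j].
Proof.
elim: k => [|k [ge0 rev mono]].
  split=> [q | q le_qN | i j i_gt0 ij_range]; rewrite !midrow0 ?ler0n //.
    by case: eqP => e1; case: eqP => e2 //; lia.
  have [i_eq | _] := eqVneq i m; last exact: ler0n.
  by rewrite (_ : j = m) ?eqxx //; lia.
split=> [q | q le_qN | i j i_gt0 ij_range]; rewrite !midrowS.
- exact: green_mul_ge0.
- exact: green_mul_rev.
- exact: green_mul_mono.
Qed.

Lemma midrow_ratio k i j : (0 < k)%N -> (i <= j <= N)%N ->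
  a i * midrow k j <= midrow k i * a j.
Proof.
case: k => // k _ ij_range; rewrite !midrowS; apply: green_mul_ratio => //.
by have [] := midrow_invariants k.
Qed.

Lemma midrow_mid_ratio {k l} : (0 < k)%N -> (0 < l < N)%N ->
  a (minn l (N - l)) * midrow k m <= midrow k l * a m.
Proof.
move=> k_gt0 l_range; have [le_lm | lt_ml] := leqP l m.
  by rewrite (minn_idPl _) ?midrow_ratio //; lia.
have [_ rev _] := midrow_invariants k.
by rewrite (minn_idPr _) ?(rev l) ?midrow_ratio //; lia.
Qed.

Lemma midrowS_mid_ge k : (0 < k)%N ->
  midrow k m * ((\sum_(1 <= l < N) a (minn l (N - l)) ^+ 2) / a N)
    <= midrow k.+1 m.
Proof.
move=> k_gt0; rewrite midrowS mulr_suml mulr_sumr; apply: ler_sum_nat => l l_range.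
rewrite green_mid //.
have bN_ge0 : 0 <= a (minn l (N - l)) / a N by rewrite divr_ge0 ?a_ge0.
by move: (midrow_mid_ratio k_gt0 l_range) => /(ler_wpM2r bN_ge0); lra.
Qed.

Lemma midrow_mid_ge k : (0 < k)%N ->
  a m ^+ 2 * (\sum_(1 <= l < N) a (minn l (N - l)) ^+ 2) ^+ k.-1 / a N ^+ k
    <= midrow k m.
Proof.
elim: k => // -[_ _ | k IHk _].
  have -> : midrow 1 m = green m m.
    rewrite midrowS -(@big_nat_delta _ (green ^~ m) 1 N m); last by lia.
    by apply: eq_bigr => l _; rewrite midrow0 mulrC.
  rewrite green_le // (_ : N - m = m)%N; last by lia.
  by rewrite /= expr0 mulr1 expr1 expr2.
set S := \sum_(1 <= l < N) _.
have aN_neq0 : a N != 0 by rewrite gt_eqF ?aN_gt0.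
have -> : a m ^+ 2 * S ^+ k.+1 / a N ^+ k.+2
          = a m ^+ 2 * S ^+ k.+1.-1 / a N ^+ k.+1 * (S / a N).
  by rewrite /= !exprS; field; rewrite aN_neq0 expf_neq0.
apply: le_trans (@midrowS_mid_ge k.+1 isT); apply: ler_wpM2r (IHk isT).
by rewrite divr_ge0 ?a_ge0 ?sumr_ge0 // => l _; rewrite sqr_ge0.
Qed.

Lemma midrow_bounds k : (0 < k)%N ->
  a m ^+ 2 * (\sum_(1 <= l < N) a (minn l (N - l)) ^+ 2) ^+ k.-1 / a N ^+ k
    <= midrow k m
  /\ forall i j, (0 < i)%N -> (i <= j <= m)%N ->
    [/\ midrow k i = midrow k (N - i), midrow k i <= midrow k j
      & a i / a m * midrow k m <= midrow k i].
Proof.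
move=> k_gt0; split=> [|i j i_gt0 ij_range]; first exact: midrow_mid_ge.
have [_ rev mono] := midrow_invariants k.
have am_gt0 : 0 < a m by apply: a_gt0; lia.
split; [apply: rev; lia | exact: mono |].
by rewrite mulrAC ler_pdivrMr // midrow_ratio //; lia.
Qed.

End Middle.

End Green.

Theorem lemmaA3 (R : realType) (kappa : R) (N : nat) :
  0 < kappa -> (2 <= N)%N -> ~~ odd N ->
  let a := aseq kappa N in
  let X := XN kappa N in
  forall k : nat, (1 <= k)%N ->
    ent 0 (X ^+ k) (N./2) (N./2) >=
      a (N./2) ^+ 2 * (\sum_(1 <= l < N) a (minn l (N - l)) ^+ 2) ^+ k.-1
        / a N ^+ k
    /\ forall i j : nat, (1 <= i)%N -> (i <= j)%N -> (j <= N./2)%N ->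
      [/\ ent 0 (X ^+ k) (N./2) i = ent 0 (X ^+ k) (N./2) (N - i),
          ent 0 (X ^+ k) (N./2) i <= ent 0 (X ^+ k) (N./2) j
        & ent 0 (X ^+ k) (N./2) i >= a i / a (N./2) * ent 0 (X ^+ k) (N./2) (N./2)].
Proof.
move=> kappa_gt0 N_ge2 N_even a X k k_gt0.
set c := 2 + kappa ^+ 2 / N%:R ^+ 2.
have c_gt2 : 2 < c.
  by rewrite /c ltrDl divr_gt0 ?exprn_gt0 ?ltr0n //; lia.
have N_double : N = (N./2 + N./2)%N.
  by rewrite -[LHS]odd_double_half (negbTE N_even) add0n -addnn.
have XE (i j : 'I_N.-1) : X i j = green a N i.+1 j.+1 by rewrite mxE.
have midrowE q : (0 < q)%N -> midrow N./2 X k q = ent 0 (X ^+ k) N./2 q.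
  by rewrite /midrow => ->.
have [lower_bound profile] := midrow_bounds (a := a) erefl erefl (fun _ => erefl)
  (ltW c_gt2) (ltnW N_ge2) N_double c_gt2 XE k_gt0.
split=> [|i j i_gt0 le_ij le_jN]; first by rewrite -midrowE //; lia.
have [rev mono ratio] := profile i j i_gt0 (introT andP (conj le_ij le_jN)).
by rewrite -!midrowE //; lia.
Qed.
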